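(* Let $r \geq 3$ and let $G$ be a graph on vertex set $[n]$ that percolates in the $K_r$-bootstrap percolation process, i.e. $\langle G \rangle_{K_r} = E(K_n)$. Then $G$ is $(r-2)$-connected.
   Context: $K_r$-bootstrap percolation: for a graph $G$ on vertex set $[n]$ (identified with its edge set $\subseteq E(K_n)$), set $G_0 := G$ and $G_{t+1} := G_t \cup \{e \in E(K_n) : \exists$ a copy $H$ of $K_r$ with $e \in H \subseteq G_t \cup \{e\}\}$; the closure is $\langle G \rangle_{K_r} := \bigcup_t G_t$, and $G$ percolates if its closure is all of $E(K_n)$. *)

From mathcomp Require Import all_boot.
Set Implicit Arguments.
Unset Strict Implicit.
Unset Printing Implicit Defensive.

(* A graph on vertex set [n] = 'I_n is identified with its edge set, a set of
   2-element subsets of 'I_n, i.e. a subset of E(K_n). *)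
Definition edgesKn (n : nat) : {set {set 'I_n}} := [set e : {set 'I_n} | #|e| == 2].

Definition is_graph (n : nat) (G : {set {set 'I_n}}) : Prop :=
  G \subset edgesKn n.

Definition clique_edges (n : nat) (S : {set 'I_n}) : {set {set 'I_n}} :=
  [set e : {set 'I_n} | (#|e| == 2) && (e \subset S)].

(* One step of K_r-bootstrap percolation:
   G_{t+1} = G_t ∪ {e ∈ E(K_n) : ∃ copy H of K_r with e ∈ H ⊆ G_t ∪ {e}}.
   A copy of K_r is the clique on an r-element vertex set S. *)
Definition Kr_step (n r : nat) (G : {set {set 'I_n}}) : {set {set 'I_n}} :=
  G :|: [set e in edgesKn n | [exists S : {set 'I_n},
          [&& #|S| == r, e \in clique_edges S & clique_edges S \subset e |: G]]].

Definition in_closure (n r : nat) (G : {set {set 'I_n}}) (e : {set 'I_n}) : Prop :=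
  exists t : nat, e \in iter t (Kr_step r) G.

Definition percolates (n r : nat) (G : {set {set 'I_n}}) : Prop :=
  forall e, e \in edgesKn n -> in_closure r G e.

Definition adj_avoid (n : nat) (G : {set {set 'I_n}}) (X : {set 'I_n}) : rel 'I_n :=
  fun x y => [&& [set x; y] \in G, x \notin X & y \notin X].

(* k-connected (Diestel's convention): more than k vertices, and G - X is
   connected for every vertex set X with |X| < k. *)
Definition k_connected (n k : nat) (G : {set {set 'I_n}}) : Prop :=
  k < n /\
  forall X : {set 'I_n}, #|X| < k ->
    forall u v : 'I_n, u \notin X -> v \notin X -> connect (adj_avoid G X) u v.

From mathcomp Require Import all_boot.
From mathcomp Require Import zify.

Set Implicit Arguments.
Unset Strict Implicit.
Unset Printing Implicit Defensive.

(* Let X have fewer than r - 2 vertices and let C be a component of G - X.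
   No edge of <G>_{K_r} joins C to a vertex outside C and X: a copy of K_r
   through a new such edge ab has r > |X| + 2 vertices, so it contains a
   vertex c outside X and {a, b}, and one of the older edges ac, cb already
   crosses the cut.  Since G percolates, C must therefore contain every
   vertex outside X. *)

Definition no_edge_leaving (n : nat) (G : {set {set 'I_n}}) (X C : {set 'I_n}) :=
  forall a b, a \in C -> b \notin C -> b \notin X -> [set a; b] \notin G.

Lemma set2_in_clique_edges (n : nat) (S : {set 'I_n}) x y :
  x \in S -> y \in S -> x != y -> [set x; y] \in clique_edges S.
Proof.
move=> xS yS xy; rewrite inE cards2 xy /=.
by apply/subsetP => z; rewrite !inE => /orP [] /eqP ->.
Qed.

Lemma set2_neq_notin (T : finType) (a b c y : T) :
  c \notin [set a; b] -> [set c; y] != [set a; b].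
Proof. by apply: contraNneq => <-; rewrite !inE eqxx. Qed.

Lemma setD_nonempty_card_lt (T : finType) (A S : {set T}) :
  #|A| < #|S| -> exists c, c \in S :\: A.
Proof.
move=> AS; apply/set0Pn; apply: contraTneq AS => /eqP.
by rewrite setD_eq0 -leqNgt => /subset_leq_card.
Qed.

Lemma no_edge_leaving_Kr_step (n r : nat) (G : {set {set 'I_n}})
    (X C : {set 'I_n}) :
  #|X| + 2 < r -> no_edge_leaving G X C -> no_edge_leaving (Kr_step r G) X C.
Proof.
move=> Xr noG a b aC bC bX; rewrite inE negb_or noG //= inE negb_and.
apply/orP; right; apply/negP => /existsP [S /and3P [/eqP cardS abS cliqueS]].
have inG x y : x \in S -> y \in S -> x != y -> [set x; y] != [set a; b] ->
    [set x; y] \in G.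
  move=> xS yS xy xyab.
  move/subsetP: cliqueS => /(_ _ (set2_in_clique_edges xS yS xy)).
  by rewrite !inE (negbTE xyab).
move: abS; rewrite inE => /andP [ab2 /subsetP abS].
have ab : a != b by apply: contraTneq ab2 => ->; rewrite setUid cards1.
have [c] : exists c, c \in S :\: (X :|: [set a; b]).
  apply: setD_nonempty_card_lt; rewrite cardS.
  apply: leq_ltn_trans Xr; apply: leq_trans (leq_card_setU _ _) _.
  by rewrite cards2 ab.
rewrite !inE negb_or => /andP [/andP [cX cab] cS].
have aS : a \in S by apply: abS; rewrite !inE eqxx.
have bS : b \in S by apply: abS; rewrite !inE eqxx orbT.
have cnab : c \notin [set a; b] by rewrite !inE.
move: cab; rewrite negb_or => /andP [ca cb].
case cC: (c \in C).
  by have /negP[] := noG c b cC bC bX; apply: inG; rewrite ?set2_neq_notin.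
have /negP[] := noG a c aC (negbT cC) cX.
by apply: inG => //; [rewrite eq_sym | rewrite setUC set2_neq_notin].
Qed.

Lemma no_edge_leaving_iter_Kr_step (n r t : nat) (G : {set {set 'I_n}})
    (X C : {set 'I_n}) :
  #|X| + 2 < r -> no_edge_leaving G X C ->
  no_edge_leaving (iter t (Kr_step r) G) X C.
Proof. by move=> Xr noG; elim: t => //= t; apply: no_edge_leaving_Kr_step. Qed.

Lemma no_edge_leaving_component (n : nat) (G : {set {set 'I_n}})
    (X : {set 'I_n}) (u : 'I_n) :
  no_edge_leaving G X [set x | (x \notin X) && connect (adj_avoid G X) u x].
Proof.
move=> a b; rewrite !inE => /andP [aX ua] + bX; rewrite bX /=.
apply: contraNN => abG; apply: connect_trans ua (connect1 _).
by rewrite /adj_avoid abG aX bX.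
Qed.

Theorem mainTheorem5 (n r : nat) (G : {set {set 'I_n}}) :
  3 <= r -> r <= n.+1 -> is_graph G -> percolates r G -> k_connected (r - 2) G.
Proof.
move=> r3 rn _ perc; split; first lia.
move=> X Xr u v uX vX; apply/idPn => nuv.
have uv : u != v by apply: contraNneq nuv => ->; apply: connect0.
have [t uv_closure] : in_closure r G [set u; v].
  by apply: perc; rewrite inE cards2 uv.
have Xr2 : #|X| + 2 < r by lia.
have noC :=
  no_edge_leaving_iter_Kr_step t Xr2 (@no_edge_leaving_component _ G X u).
by apply: (negP (noC u v _ _ vX)) uv_closure; rewrite inE ?uX ?vX ?connect0.
Qed.
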